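(* For any additive submonoid $N \subseteq \mathbb{N}$, both $\mathrm{Sym}(\Omega) \cup S(N)$ and $\mathrm{Sym}(\Omega) \cup S(N) \cup \mathrm{Inj}_{\infty}(\Omega)$ are submonoids of $\mathrm{Inj}(\Omega)$. Conversely, every submonoid $M \subseteq \mathrm{Inj}(\Omega)$ containing $\mathrm{Sym}(\Omega)$ equals either $\mathrm{Sym}(\Omega) \cup S(N)$ or $\mathrm{Sym}(\Omega) \cup S(N) \cup \mathrm{Inj}_{\infty}(\Omega)$, where $N = M_\mathbb{N}$ (a submonoid of $\mathbb{N}$).
   Context: $\Omega$ is a countably infinite set; $\mathrm{Inj}(\Omega)$ is the monoid of all injective maps $\Omega\to\Omega$ under composition (maps written on the right), $\mathrm{Sym}(\Omega)$ the group of permutations. $\mathbb{N}$ denotes the nonnegative integers. $\mathrm{Inj}_\infty(\Omega)=\{f\in\mathrm{Inj}(\Omega): |\Omega\setminus(\Omega)f|=\aleph_0\}$. For $M\subseteq\mathrm{Inj}(\Omega)$, $M_\mathbb{N}=\{|\Omega\setminus(\Omega)f|: f\in M\}\cap\mathbb{N}$. For $N\subseteq\mathbb{N}$, $S(N)=\{f\in\mathrm{Inj}(\Omega): |\Omega\setminus(\Omega)f|\in N\setminus\{0\}\}$. *)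

From Stdlib Require Import List Arith.
Import ListNotations.

(* Maps are functions Omega -> Omega,
   composed on the right: "f then g" is (fun x => g (f x)). *)

Definition countably_infinite (Omega : Type) : Prop :=
  exists e : Omega -> nat, (forall x y, e x = e y -> x = y) /\ (forall n, exists x, e x = n).

Definition inj {Omega : Type} (f : Omega -> Omega) : Prop :=
  forall x y, f x = f y -> x = y.

Definition Sym {Omega : Type} (f : Omega -> Omega) : Prop :=
  inj f /\ forall y, exists x, f x = y.

Definition notin_image {Omega : Type} (f : Omega -> Omega) (y : Omega) : Prop :=
  ~ exists x, f x = y.

Definition codefect {Omega : Type} (f : Omega -> Omega) (n : nat) : Prop :=
  exists l : list Omega, NoDup l /\ length l = n /\
    (forall y, In y l <-> notin_image f y).

(* |Omega \ (Omega)f| = aleph_0 : the complement of the image is infinite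
   (Omega being countable, infinite means countably infinite). *)
Definition codefect_infinite {Omega : Type} (f : Omega -> Omega) : Prop :=
  forall l : list Omega, exists y, notin_image f y /\ ~ In y l.

Definition Inj_inf {Omega : Type} (f : Omega -> Omega) : Prop :=
  inj f /\ codefect_infinite f.

Definition S_of {Omega : Type} (N : nat -> Prop) (f : Omega -> Omega) : Prop :=
  inj f /\ exists n, codefect f n /\ N n /\ n <> 0.

Definition M_nat {Omega : Type} (M : (Omega -> Omega) -> Prop) (n : nat) : Prop :=
  exists f, M f /\ codefect f n.

Definition nat_submonoid (N : nat -> Prop) : Prop :=
  N 0 /\ forall m n, N m -> N n -> N (m + n).

Definition inj_submonoid {Omega : Type} (M : (Omega -> Omega) -> Prop) : Prop :=
  (forall f, M f -> inj f) /\ M (fun x => x) /\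
  forall f g, M f -> M g -> M (fun x => g (f x)).

From Stdlib Require Import List Arith Lia ClassicalEpsilon FunctionalExtensionality FinFun.
Import ListNotations.

(* Codefect is additive under composition of injections, and infinite codefect is
   absorbing, which gives the two submonoids.  Conversely, the image of an injection
   of a countably infinite set is always countably infinite, so two injections with
   the same codefect differ only by permutations on either side: f = r f0 q with
   r, q in Sym.  A submonoid containing Sym therefore contains every injection whose
   codefect is realised by one of its elements. *)

Definition image {X Y : Type} (f : X -> Y) (y : Y) : Prop := exists x, f x = y.

Definition infinite {X : Type} (A : X -> Prop) : Prop :=
  forall l : list X, exists y, A y /\ ~ In y l.

Definition bij_on {X Y : Type} (A : X -> Prop) (B : Y -> Prop) (h : X -> Y) : Prop :=
  (forall x, A x -> B (h x)) /\ (forall x y, A x -> A y -> h x = h y -> x = y) /\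
  (forall z, B z -> exists x, A x /\ h x = z).

Definition equipotent {X Y : Type} (A : X -> Prop) (B : Y -> Prop) : Prop :=
  exists h, bij_on A B h.

Lemma equipotent_trans {X Y Z : Type} (A : X -> Prop) (B : Y -> Prop) (C : Z -> Prop) :
  equipotent A B -> equipotent B C -> equipotent A C.
Proof.
  intros [h [h1 [h2 h3]]] [k [k1 [k2 k3]]]. exists (fun x => k (h x)). split; [|split].
  - auto.
  - intros x y Hx Hy E. auto.
  - intros z Hz. destruct (k3 z Hz) as [y [Hy <-]]. destruct (h3 y Hy) as [x [Hx <-]].
    eauto.
Qed.

Lemma equipotent_sym {X Y : Type} (x0 : X) (A : X -> Prop) (B : Y -> Prop) :
  equipotent A B -> equipotent B A.
Proof.
  intros [h [h1 [h2 h3]]].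
  assert (Hinv : forall z, exists x, B z -> A x /\ h x = z).
  { intro z. destruct (classic (B z)) as [Bz|Bz].
    - destruct (h3 z Bz) as [x Hx]. eauto.
    - exists x0. contradiction. }
  destruct (choice _ Hinv) as [g Hg]. exists g. split; [|split].
  - intros z Bz. apply (Hg z Bz).
  - intros z1 z2 B1 B2 E. rewrite <- (proj2 (Hg z1 B1)), <- (proj2 (Hg z2 B2)), E.
    reflexivity.
  - intros x Ax. exists (h x). split; auto.
    destruct (Hg (h x) (h1 x Ax)) as [Agx Egx]. auto.
Qed.

Lemma unbounded_nat_equipotent (P : nat -> Prop) :
  (forall m, exists n, m <= n /\ P n) -> equipotent (fun _ : nat => True) P.
Proof.
  intro HP.
  assert (Hleast : forall m, exists n, (m <= n /\ P n) /\ forall k, m <= k /\ P k -> n <= k).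
  { intro m. destruct (dec_inh_nat_subset_has_unique_least_element
      (fun n => m <= n /\ P n) (fun n => classic _) (HP m)) as [n [Hn _]]. eauto. }
  destruct (choice _ Hleast) as [next Hnext].
  (* [en k] is the k-th element of P in increasing order. *)
  pose (en := fix en k := match k with 0 => next 0 | S k => next (S (en k)) end).
  assert (HPen : forall k, P (en k)) by (destruct k; apply Hnext).
  assert (Hlt : forall k, en k < en (S k)) by (intro k; apply (Hnext (S (en k)))).
  assert (Hmono : forall i j, i < j -> en i < en j).
  { induction 1; [apply Hlt | specialize (Hlt m); lia]. }
  assert (Hcover : forall k n, P n -> n <= en k -> exists j, en j = n).
  { induction k as [|k IHk]; intros n Pn Hn.
    - exists 0. pose proof (proj2 (Hnext 0) n (conj (Nat.le_0_l n) Pn)). simpl in *. lia.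
    - destruct (le_lt_dec n (en k)) as [Hle|Hgt]; [auto|].
      exists (S k). pose proof (proj2 (Hnext (S (en k))) n (conj Hgt Pn)). simpl in *. lia. }
  assert (Hge : forall k, k <= en k) by (induction k; [lia | specialize (Hlt k); lia]).
  exists en. split; [|split].
  - auto.
  - intros i j _ _ E. destruct (lt_eq_lt_dec i j) as [[H|H]|H]; auto;
      apply Hmono in H; lia.
  - intros n Pn. destruct (Hcover n n Pn (Hge n)) as [j Hj]. eauto.
Qed.

Lemma NoDup_listing_equipotent {X : Type} (x0 : X) (l : list X) (A : X -> Prop) :
  NoDup l -> (forall y, In y l <-> A y) -> equipotent (fun i => i < length l) A.
Proof.
  intros Hl HA. exists (fun i => nth i l x0). split; [|split].
  - intros i Hi. apply HA, nth_In, Hi.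
  - intros i j Hi Hj. apply (NoDup_nth l x0); auto.
  - intros z Hz. apply HA, (In_nth l z x0) in Hz. destruct Hz as [i [Hi E]]. eauto.
Qed.

Lemma finite_listing {X : Type} (l : list X) (P : X -> Prop) :
  (forall y, P y -> In y l) -> exists k, NoDup k /\ forall y, In y k <-> P y.
Proof.
  intro HP.
  pose (dec := fun y => if excluded_middle_informative (P y) then true else false).
  exists (filter dec (nodup (fun x y => excluded_middle_informative (x = y)) l)). split.
  - apply NoDup_filter, NoDup_nodup.
  - intro y. rewrite filter_In, nodup_In. unfold dec.
    destruct (excluded_middle_informative (P y)) as [Py|Py].
    + split; [tauto | auto].
    + split; [intros [_ E]; discriminate E | contradiction].
Qed.

Lemma preimage_listing {X Y : Type} (g : X -> Y) (l : list Y) :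
  Injective g -> exists k, forall y, In (g y) l -> In y k.
Proof.
  intro Hg. induction l as [|a l [k Hk]].
  - exists []. intros y [].
  - destruct (classic (image g a)) as [[z Ez]|Ha].
    + exists (z :: k). intros y [E|Hy]; [left; apply Hg; congruence | right; auto].
    + exists k. intros y [E|Hy]; [exfalso; apply Ha; exists y; auto | auto].
Qed.

Section Codefect.

Variable Omega : Type.
Implicit Types f g : Omega -> Omega.

Lemma Sym_iff_codefect0 f : Sym f <-> inj f /\ codefect f 0.
Proof.
  split.
  - intros [Hf Hsurj]. split; auto. exists []. repeat split; [constructor | intros [] |].
    intros Hy. exfalso. apply Hy, Hsurj.
  - intros [Hf [l [_ [Hl Hcompl]]]]. split; auto. intro y. apply NNPP. intro Hy.
    apply length_zero_iff_nil in Hl. subst l. apply (proj2 (Hcompl y) Hy).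
Qed.

Lemma inj_comp f g : inj f -> inj g -> inj (fun x => g (f x)).
Proof. intros Hf Hg x y E. apply Hf, Hg, E. Qed.

Lemma codefect_dichotomy f : (exists n, codefect f n) \/ codefect_infinite f.
Proof.
  destruct (classic (codefect_infinite f)) as [H|H]; auto. left.
  apply not_all_ex_not in H. destruct H as [l Hl].
  destruct (finite_listing l (notin_image f)) as [k [Hk Hkf]].
  - intros y Hy. apply NNPP. intro Hyl. apply Hl. eauto.
  - exists (length k), k. auto.
Qed.

(* The complement of the image of [f] then [g] is the complement of the image of [g]
   together with the [g]-image of the complement of the image of [f]. *)
Lemma codefect_comp f g a b : inj g -> codefect f a -> codefect g b ->
  codefect (fun x => g (f x)) (a + b).
Proof.
  intros Hg [la [Ha [La HAa]]] [lb [Hb [Lb HAb]]]. exists (lb ++ map g la). split; [|split].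
  - apply NoDup_app; auto using Injective_map_NoDup.
    intros y Hy Hy'. apply in_map_iff in Hy'. destruct Hy' as [z [Ez _]].
    apply HAb in Hy. eauto.
  - rewrite length_app, length_map. lia.
  - intro y. rewrite in_app_iff, in_map_iff. split.
    + intros [Hy|[z [<- Hz]]] [x Ex].
      * apply HAb in Hy. eauto.
      * apply HAa in Hz. apply Hz. exists x. apply Hg, Ex.
    + intro Hy. destruct (classic (image g y)) as [[z <-]|Hn].
      * right. exists z. split; auto. apply HAa. intros [x Ex]. apply Hy. exists x.
        congruence.
      * left. apply HAb, Hn.
Qed.

Lemma codefect_infinite_compl f g : inj g -> codefect_infinite f ->
  codefect_infinite (fun x => g (f x)).
Proof.
  intros Hg Hf l. destruct (preimage_listing g l Hg) as [k Hk].
  destruct (Hf k) as [y [Hy Hyk]]. exists (g y). split.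
  - intros [x Ex]. apply Hy. exists x. apply Hg, Ex.
  - auto.
Qed.

Lemma codefect_infinite_compr f g : codefect_infinite g ->
  codefect_infinite (fun x => g (f x)).
Proof.
  intros Hg l. destruct (Hg l) as [y [Hy Hyl]]. exists y. split; auto.
  intros [x Ex]. apply Hy. eauto.
Qed.

Lemma Sym_or_S_ofE (N : nat -> Prop) f : N 0 ->
  (Sym f \/ S_of N f) <-> (inj f /\ exists n, codefect f n /\ N n).
Proof.
  intro N0. rewrite Sym_iff_codefect0. split.
  - intros [[Hf Hf0]|[Hf [n [Hn [Nn _]]]]]; eauto.
  - intros [Hf [[|n] [Hn Nn]]]; [left | right; split]; eauto 6.
Qed.

Lemma Sym_S_of_submonoid (N : nat -> Prop) : nat_submonoid N ->
  inj_submonoid (fun f => Sym f \/ S_of N f).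
Proof.
  intros [N0 Nadd]. split; [|split].
  - intros f Hf. apply (Sym_or_S_ofE N f N0) in Hf. apply Hf.
  - left. split; [intros x y E; exact E | intro y; exists y; reflexivity].
  - intros f g Hf Hg. apply Sym_or_S_ofE in Hf, Hg; auto. apply Sym_or_S_ofE; auto.
    destruct Hf as [Hf [a [Ha Na]]], Hg as [Hg [b [Hb Nb]]].
    split; [apply inj_comp; auto|]. exists (a + b). auto using codefect_comp.
Qed.

Lemma Sym_S_of_Inj_inf_submonoid (N : nat -> Prop) : nat_submonoid N ->
  inj_submonoid (fun f => Sym f \/ S_of N f \/ Inj_inf f).
Proof.
  intros HN. destruct (Sym_S_of_submonoid N HN) as [Hinj [Hid Hcomp]].
  assert (Hinj' : forall f, Sym f \/ S_of N f \/ Inj_inf f -> inj f).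
  { intros f [Hf|[Hf|[Hf _]]]; auto. }
  split; [exact Hinj' | split; [tauto|]].
  intros f g Hf Hg.
  destruct (classic (Inj_inf f \/ Inj_inf g)) as [[[_ Hfi]|[_ Hgi]]|Hfin].
  - right; right. split; [apply inj_comp|apply codefect_infinite_compl]; auto.
  - right; right. split; [apply inj_comp|apply codefect_infinite_compr]; auto.
  - assert (Hf' : Sym f \/ S_of N f) by tauto.
    assert (Hg' : Sym g \/ S_of N g) by tauto.
    destruct (Hcomp f g Hf' Hg'); tauto.
Qed.

Lemma Sym_glue (A B : Omega -> Prop) :
  equipotent A B -> equipotent (fun y => ~ A y) (fun y => ~ B y) ->
  exists q, Sym q /\ forall y, A y <-> B (q y).
Proof.
  intros [h [h1 [h2 h3]]] [k [k1 [k2 k3]]].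
  pose (q y := if excluded_middle_informative (A y) then h y else k y).
  assert (Qin : forall y, A y -> q y = h y).
  { intros y Hy. unfold q. destruct (excluded_middle_informative (A y)); tauto. }
  assert (Qout : forall y, ~ A y -> q y = k y).
  { intros y Hy. unfold q. destruct (excluded_middle_informative (A y)); tauto. }
  assert (HAq : forall y, A y <-> B (q y)).
  { intro y. destruct (classic (A y)) as [Ay|Ay].
    - rewrite Qin by exact Ay. split; auto.
    - rewrite Qout by exact Ay. split; [tauto | intro Hk; exfalso; exact (k1 y Ay Hk)]. }
  exists q. split; [split|exact HAq].
  - intros x y E. destruct (classic (A x)) as [Ax|Ax], (classic (A y)) as [Ay|Ay].
    + rewrite !Qin in E; auto.
    + exfalso. apply Ay, HAq. rewrite <- E. apply HAq, Ax.
    + exfalso. apply Ax, HAq. rewrite E. apply HAq, Ay.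
    + rewrite !Qout in E; auto.
  - intro z. destruct (classic (B z)) as [Bz|Bz].
    + destruct (h3 z Bz) as [x [Ax <-]]. exists x. apply Qin, Ax.
    + destruct (k3 z Bz) as [x [Ax <-]]. exists x. apply Qout, Ax.
Qed.

Lemma Sym_factor f0 f q : inj f0 -> inj f -> Sym q ->
  (forall y, image f0 y <-> image f (q y)) ->
  exists r, Sym r /\ f = (fun x => q (f0 (r x))).
Proof.
  intros Hf0 Hf [Hq Hqsurj] Himg.
  assert (Hr : forall x, exists y, q (f0 y) = f x).
  { intro x. destruct (Hqsurj (f x)) as [w Ew].
    assert (Hw : image f0 w) by (apply Himg; rewrite Ew; exists x; reflexivity).
    destruct Hw as [y <-]. eauto. }
  destruct (choice _ Hr) as [r Er]. exists r. split.
  - split.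
    + intros a b E. apply Hf. rewrite <- Er, <- (Er b), E. reflexivity.
    + intro y. destruct (proj1 (Himg (f0 y)) (ex_intro _ y eq_refl)) as [x Ex].
      exists x. apply Hf0, Hq. rewrite Er. auto.
  - extensionality x. symmetry. apply Er.
Qed.

Lemma Sym_double_coset f0 f : inj f0 -> inj f ->
  equipotent (image f0) (image f) -> equipotent (notin_image f0) (notin_image f) ->
  exists q r, Sym q /\ Sym r /\ f = (fun x => q (f0 (r x))).
Proof.
  intros Hf0 Hf Himg Hcompl. destruct (Sym_glue _ _ Himg Hcompl) as [q [Hq Hq_img]].
  destruct (Sym_factor f0 f q Hf0 Hf Hq Hq_img) as [r [Hr ->]]. eauto.
Qed.

Section Countable.

Variables (d : nat -> Omega) (e : Omega -> nat).
Hypotheses (Hed : forall y, d (e y) = y) (Hde : forall n, e (d n) = n).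

Lemma infinite_unbounded (A : Omega -> Prop) : infinite A ->
  forall m, exists n, m <= n /\ A (d n).
Proof.
  intros HA m. destruct (HA (map d (seq 0 m))) as [y [Ay Hy]]. exists (e y).
  rewrite Hed. split; auto.
  destruct (le_lt_dec m (e y)); auto. exfalso. apply Hy, in_map_iff.
  exists (e y). split; [apply Hed | apply in_seq; lia].
Qed.

Lemma infinite_equipotent (A B : Omega -> Prop) :
  infinite A -> infinite B -> equipotent A B.
Proof.
  assert (Hd : forall C : Omega -> Prop, equipotent (fun n => C (d n)) C).
  { intro C. exists d. split; [|split]; auto.
    - intros n m _ _ E. rewrite <- (Hde n), <- (Hde m), E. reflexivity.
    - intros z Hz. exists (e z). rewrite Hed. auto. }
  intros HA HB.
  apply (equipotent_trans _ (fun _ : nat => True)).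
  - apply (equipotent_sym 0), (equipotent_trans _ _ _ (unbounded_nat_equipotent _
      (infinite_unbounded A HA)) (Hd A)).
  - exact (equipotent_trans _ _ _ (unbounded_nat_equipotent _
      (infinite_unbounded B HB)) (Hd B)).
Qed.

(* Pigeonhole: [f] maps [length l + 1] distinct points to distinct points. *)
Lemma image_infinite f : inj f -> infinite (image f).
Proof.
  intros Hf l. apply NNPP. intro Hl.
  pose (pts := map (fun i => f (d i)) (seq 0 (S (length l)))).
  assert (Hpts : NoDup pts).
  { apply Injective_map_NoDup; [|apply seq_NoDup].
    intros i j E. rewrite <- (Hde i), <- (Hde j), (Hf _ _ E). reflexivity. }
  assert (Hincl : incl pts l).
  { intros y Hy. apply in_map_iff in Hy. destruct Hy as [i [<- _]].
    apply NNPP. intro Hy. apply Hl. exists (f (d i)). split; [exists (d i); reflexivity | exact Hy]. }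
  apply (NoDup_incl_length Hpts) in Hincl.
  unfold pts in Hincl. rewrite length_map, length_seq in Hincl. lia.
Qed.

Lemma codefect_double_coset f0 f n : inj f0 -> inj f ->
  codefect f0 n -> codefect f n ->
  exists q r, Sym q /\ Sym r /\ f = (fun x => q (f0 (r x))).
Proof.
  intros Hf0 Hf [l0 [Hl0 [L0 H0]]] [l [Hl [L H]]].
  apply Sym_double_coset; auto using infinite_equipotent, image_infinite.
  apply (equipotent_trans _ (fun i => i < n)).
  - subst n. apply (equipotent_sym 0), (NoDup_listing_equipotent (d 0)); auto.
  - rewrite <- L. apply (NoDup_listing_equipotent (d 0)); auto.
Qed.

Lemma codefect_infinite_double_coset f0 f : inj f0 -> inj f ->
  codefect_infinite f0 -> codefect_infinite f ->
  exists q r, Sym q /\ Sym r /\ f = (fun x => q (f0 (r x))).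
Proof.
  intros Hf0 Hf H0 H.
  apply Sym_double_coset; auto using infinite_equipotent, image_infinite.
Qed.

Section Submonoid.

Variable M : (Omega -> Omega) -> Prop.
Hypotheses (HM : inj_submonoid M) (HSym : forall f, Sym f -> M f).

Lemma submonoid_double_coset f0 q r : M f0 -> Sym q -> Sym r ->
  M (fun x => q (f0 (r x))).
Proof.
  destruct HM as [_ [_ Hcomp]]. intros Mf0 Hq Hr.
  apply (Hcomp (fun x => f0 (r x))); auto.
Qed.

Lemma M_nat_submonoid : nat_submonoid (M_nat M).
Proof.
  destruct HM as [_ [Hid Hcomp]]. split.
  - exists (fun x => x). split; auto. apply Sym_iff_codefect0.
    split; [intros x y E; exact E | intro y; exists y; reflexivity].
  - intros m n [f [Mf Hm]] [g [Mg Hn]]. exists (fun x => g (f x)).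
    split; auto. apply codefect_comp; auto. apply HM, Mg.
Qed.

Lemma M_classify f : M f -> Sym f \/ S_of (M_nat M) f \/ Inj_inf f.
Proof.
  intro Mf. assert (Hf : inj f) by (apply HM, Mf).
  destruct (codefect_dichotomy f) as [[[|n] Hn]|Hinf].
  - left. apply Sym_iff_codefect0. auto.
  - right; left. split; auto. exists (S n). repeat split; auto. exists f. auto.
  - right; right. split; auto.
Qed.

Lemma M_codefect_mem f n : inj f -> codefect f n -> M_nat M n -> M f.
Proof.
  intros Hf Hn [f0 [Mf0 Hn0]].
  destruct (codefect_double_coset f0 f n) as [q [r [Hq [Hr ->]]]]; auto.
  - apply HM, Mf0.
  - apply submonoid_double_coset; auto.
Qed.

Lemma M_codefect_infinite_mem f0 f : M f0 -> codefect_infinite f0 ->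
  inj f -> codefect_infinite f -> M f.
Proof.
  intros Mf0 Hf0 Hf Hinf.
  destruct (codefect_infinite_double_coset f0 f) as [q [r [Hq [Hr ->]]]]; auto.
  - apply HM, Mf0.
  - apply submonoid_double_coset; auto.
Qed.

End Submonoid.
End Countable.
End Codefect.

Theorem mainTheorem5 (Omega : Type) (HOmega : countably_infinite Omega) :
  (forall N : nat -> Prop, nat_submonoid N ->
     inj_submonoid (fun f : Omega -> Omega => Sym f \/ S_of N f) /\
     inj_submonoid (fun f : Omega -> Omega => Sym f \/ S_of N f \/ Inj_inf f)) /\
  (forall M : (Omega -> Omega) -> Prop, inj_submonoid M ->
     (forall f, Sym f -> M f) ->
     nat_submonoid (M_nat M) /\
     ((forall f, M f <-> (Sym f \/ S_of (M_nat M) f)) \/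
      (forall f, M f <-> (Sym f \/ S_of (M_nat M) f \/ Inj_inf f)))).
Proof.
  destruct HOmega as [e [He Hesurj]]. destruct (choice _ Hesurj) as [d Hde].
  assert (Hed : forall y, d (e y) = y) by (intro y; apply He, Hde).
  split.
  - intros N HN. auto using Sym_S_of_submonoid, Sym_S_of_Inj_inf_submonoid.
  - intros M HM HSym. split; [apply M_nat_submonoid; auto|].
    pose proof (M_codefect_mem _ d e Hed Hde M HM HSym) as Hfin.
    destruct (classic (exists f0, M f0 /\ codefect_infinite f0)) as [[f0 [Mf0 Hf0]]|Hno].
    + right. intro f. split; [apply M_classify; auto|].
      intros [Hf|[[Hf [n [Hn [Mn _]]]]|[Hf Hinf]]]; eauto.
      apply (M_codefect_infinite_mem _ d e Hed Hde M HM HSym f0); auto.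
    + left. intro f. split.
      * intro Mf. destruct (M_classify _ M HM f Mf) as [?|[?|[_ Hinf]]]; auto.
        exfalso. eauto.
      * intros [Hf|[Hf [n [Hn [Mn _]]]]]; eauto.
Qed.
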